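(* Let $\Gamma$ be the bipartite graph with vertex set $\{L_1,\dots,L_{12}\}\sqcup\{M_1,\dots,M_{12}\}$, where no two $L$'s and no two $M$'s are adjacent, and $L_i$ is adjacent to $M_j$ if and only if $j\in N(i)$, with $N(1)=\{1,2,6,8,9,12\}$, $N(2)=\{1,2,5,7,10,11\}$, $N(3)=\{3,4,6,8,10,11\}$, $N(4)=\{3,4,5,7,9,12\}$, $N(5)=\{2,4,5,6,10,12\}$, $N(6)=\{1,3,5,6,9,11\}$, $N(7)=\{2,4,7,8,9,11\}$, $N(8)=\{1,3,7,8,10,12\}$, $N(9)=\{1,4,6,7,9,10\}$, $N(10)=\{2,3,5,8,9,10\}$, $N(11)=\{2,3,6,7,11,12\}$, $N(12)=\{1,4,5,8,11,12\}$. Let $\mathbb{Z}\Gamma$ be the free abelian group on the $24$ vertices with the symmetric bilinear form whose Gram matrix is $A-2\mathbb{I}_{24}$ ($A$ the adjacency matrix of $\Gamma$), and let $S=\mathbb{Z}\Gamma/\operatorname{rad}(\mathbb{Z}\Gamma)$, where $\operatorname{rad}(\mathbb{Z}\Gamma)$ is the kernel of the form. Then $S$ has rank $15$ and is freely generated by the images of $L_2, L_3, L_4, L_5, L_6, L_7, L_8, L_{11}, M_1, M_2, M_3, M_6, M_8, M_9, M_{12}$. Moreover, the discriminant group $S^\vee/S$ is isomorphic to $(\mathbb{Z}/2\mathbb{Z})^{\oplus 4}\oplus\mathbb{Z}/16\mathbb{Z}$.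
   Context: The radical of a lattice $L$ is $L^\perp=\{v\in L: v\cdot w=0\ \forall w\in L\}$; $S$ is a nondegenerate lattice and $S^\vee=\operatorname{Hom}(S,\mathbb{Z})$ is its dual. *)

From mathcomp Require Import all_boot all_order all_algebra.
Set Implicit Arguments. Unset Strict Implicit. Unset Printing Implicit Defensive.
Import GRing.Theory Num.Theory.
Local Open Scope ring_scope.

Definition Nbr (i : nat) : seq nat :=
  match i with
  | 1 => [:: 1; 2; 6; 8; 9; 12]%N
  | 2 => [:: 1; 2; 5; 7; 10; 11]%N
  | 3 => [:: 3; 4; 6; 8; 10; 11]%N
  | 4 => [:: 3; 4; 5; 7; 9; 12]%N
  | 5 => [:: 2; 4; 5; 6; 10; 12]%N
  | 6 => [:: 1; 3; 5; 6; 9; 11]%N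
  | 7 => [:: 2; 4; 7; 8; 9; 11]%N
  | 8 => [:: 1; 3; 7; 8; 10; 12]%N
  | 9 => [:: 1; 4; 6; 7; 9; 10]%N
  | 10 => [:: 2; 3; 5; 8; 9; 10]%N
  | 11 => [:: 2; 3; 6; 7; 11; 12]%N
  | 12 => [:: 1; 4; 5; 8; 11; 12]%N
  | _ => [::]
  end.

(* Vertices are indexed by 'I_24: L_i is index i-1 (0..11), M_j is index 11+j (12..23). *)
Definition Lv (i : nat) : 'I_24 := inord i.-1.
Definition Mv (j : nat) : 'I_24 := inord (11 + j).

Definition adj (a b : 'I_24) : bool :=
  [&& (a < 12)%N, (12 <= b)%N & ((b - 11)%N \in Nbr a.+1)]
  || [&& (b < 12)%N, (12 <= a)%N & ((a - 11)%N \in Nbr b.+1)].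

Definition Gram : 'M[int]_24 :=
  \matrix_(a, b) ((adj a b)%:R - ((a == b)%:R *+ 2)).

(* Radical (kernel) of the form: v with v . w = 0 for all w, i.e. v *m Gram = 0. *)
Definition radZG : pred 'rV[int]_24 := fun v => v *m Gram == 0.

Definition evec (a : 'I_24) : 'rV[int]_24 := delta_mx 0 a.

Definition gens : seq 'I_24 :=
  [:: Lv 2; Lv 3; Lv 4; Lv 5; Lv 6; Lv 7; Lv 8; Lv 11;
      Mv 1; Mv 2; Mv 3; Mv 6; Mv 8; Mv 9; Mv 12].
Definition gen (k : 'I_15) : 'I_24 := nth ord0 gens k.

(* Dual S^vee = Hom(S, Z): homomorphisms Z Gamma -> Z vanishing on the radical,
   represented by column vectors w (v |-> v *m w). *)
Definition dualS (w : 'cV[int]_24) : Prop := forall r, r \in radZG -> r *m w = 0.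

(* The image of S in S^vee: functionals y |-> y . x = y *m Gram *m x^T. *)
Definition inS (w : 'cV[int]_24) : Prop := exists x : 'rV[int]_24, w = Gram *m x^T.

Definition Dtarget : zmodType := ('Z_2 * 'Z_2 * 'Z_2 * 'Z_2 * 'Z_16)%type.

(* The Gram matrix G = A - 2I of Gamma factors as G = W G_P, where G_P consists of the rows of
   the 15 chosen generators, so their images span S = Z Gamma / rad.  The principal 15 x 15 block
   G_PP has Smith normal form L diag(1,...,1,2,2,2,2,16) R with L and R unimodular.  Since the
   invariant factors are nonzero, G_PP is nondegenerate and the generators are independent modulo
   the radical.  A functional w on S is determined by its values on the generators, which can be
   arbitrary, so S^vee = Z^15; the image of S is G_PP Z^15, whence S^vee / S = coker G_PP
   = Z/2 + Z/2 + Z/2 + Z/2 + Z/16, read off on the coordinates U w_P with U = L^-1.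
   The matrix identities for the explicit W, L, L^-1, R, R^-1 are checked by evaluation. *)

From mathcomp Require Import all_boot all_order all_algebra.
Set Implicit Arguments. Unset Strict Implicit. Unset Printing Implicit Defensive.
Import GRing.Theory Num.Theory.
Local Open Scope ring_scope.

Definition lattice_dual n (G : 'M[int]_n) (w : 'cV[int]_n) : Prop :=
  forall r : 'rV[int]_n, r *m G == 0 -> r *m w = 0.

Lemma dual_mulmx n (G : 'M[int]_n) (x : 'cV[int]_n) : lattice_dual G (G *m x).
Proof. by move=> r /eqP rG0; rewrite mulmxA rG0 mul0mx. Qed.

Section SmithCertificate.

Variables (n m : nat) (G : 'M[int]_n) (g : 'I_m -> 'I_n).
Variables (W : 'M[int]_(n, m)) (L U R V : 'M[int]_m) (d : 'rV[int]_m).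
Hypotheses (G_sym : G^T = G) (G_factor : G = W *m rowsub g G).
Hypotheses (UL : U *m L = 1%:M) (RV : R *m V = 1%:M).
Hypotheses (G_smith : mxsub g g G = L *m diag_mx d *m R) (d_neq0 : forall i, d 0 i != 0).

Local Notation E := (rowsub g (1%:M : 'M[int]_n)).
Local Notation F := (colsub g (1%:M : 'M[int]_n)).

Lemma mxsub_gen_mulE : mxsub g g G = rowsub g G *m F.
Proof. by rewrite mulmx_colsub mulmx1 mxsubcr. Qed.

Lemma mxsub_gen_free k (c : 'M[int]_(k, m)) : c *m mxsub g g G = 0 -> c = 0.
Proof.
rewrite G_smith !mulmxA => cLDR0.
have cLD0 : c *m L *m diag_mx d = 0 by rewrite -[LHS]mulmx1 -RV mulmxA cLDR0 mul0mx.
have cL0 : c *m L = 0.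
  apply/matrixP => i j; have /matrixP/(_ i j) := cLD0.
  by rewrite mul_mx_diag !mxE => /eqP; rewrite mulf_eq0 (negbTE (d_neq0 j)) orbF => /eqP.
by rewrite -[c]mulmx1 -(mulmx1C UL) mulmxA cL0 mul0mx.
Qed.

Lemma sum_delta_gen (c : 'rV[int]_m) :
  \sum_k c 0 k *: delta_mx 0 (g k) = c *m E.
Proof. by rewrite mulmx_sum_row; apply: eq_bigr => k _; rewrite row_rowsub row1. Qed.

Lemma gen_span (v : 'rV[int]_n) : (v - v *m W *m E) *m G = 0.
Proof. by rewrite mulmxBl -!mulmxA -rowsubE -G_factor subrr. Qed.

Lemma gen_free (c : 'rV[int]_m) : c *m E *m G = 0 -> c = 0.
Proof.
by move=> cEG0; apply: mxsub_gen_free; rewrite mxsub_gen_mulE rowsubE !mulmxA cEG0 mul0mx.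
Qed.

Lemma rowsub_gen_coeffs : rowsub g W = 1%:M.
Proof.
apply/eqP; rewrite -subr_eq0; apply/eqP/mxsub_gen_free.
by rewrite mulmxBl mul1mx mxsub_gen_mulE mulmxA mul_rowsub_mx -G_factor subrr.
Qed.

Lemma dual_gen_ext {w} : lattice_dual G w -> w = W *m rowsub g w.
Proof.
move=> w_dual; apply/row_matrixP => a; rewrite !rowE.
have /eqP/w_dual := gen_span (delta_mx 0 a).
by rewrite mulmxBl => /subr0_eq ->; rewrite -!mulmxA -rowsubE.
Qed.

Lemma dual_gen_coeffs z : lattice_dual G (W *m z).
Proof.
move=> r /eqP rG0; suff rW0 : r *m W = 0 by rewrite mulmxA rW0 mul0mx.
apply: mxsub_gen_free.
by rewrite mxsub_gen_mulE mulmxA -(mulmxA r) -G_factor rG0 mul0mx.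
Qed.

Lemma rowsub_gen_G : rowsub g G = mxsub g g G *m W^T.
Proof.
have Gsub_sym : (mxsub g g G)^T = mxsub g g G by rewrite trmx_mxsub G_sym.
by rewrite -[LHS]trmxK trmx_mxsub G_sym {1}G_factor -mulmx_colsub -mxsubcr trmx_mul Gsub_sym.
Qed.

Definition smith_coord (w : 'cV[int]_n) : 'cV[int]_m := U *m rowsub g w.

Lemma smith_coordD w1 w2 : smith_coord (w1 + w2) = smith_coord w1 + smith_coord w2.
Proof. by rewrite /smith_coord -mulmxDr; congr (U *m _); apply/matrixP => i j; rewrite !mxE. Qed.

Lemma smith_coord_surj t : exists2 w, lattice_dual G w & smith_coord w = t.
Proof.
exists (W *m (L *m t)); first exact: dual_gen_coeffs.
by rewrite /smith_coord -mul_rowsub_mx rowsub_gen_coeffs mul1mx mulmxA UL mul1mx.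
Qed.

Lemma smith_coord_mulmx x : smith_coord (G *m x) = diag_mx d *m (R *m W^T *m x).
Proof.
rewrite /smith_coord -mul_rowsub_mx rowsub_gen_G G_smith !mulmxA UL mul1mx.
by rewrite -!mulmxA.
Qed.

Lemma dual_image_smith_dvd w : lattice_dual G w ->
  (exists x, w = G *m x) <-> (forall i, (d ord0 i %| smith_coord w i ord0)%Z).
Proof.
move=> w_dual; split=> [[x ->] i|dvd_coord].
  by rewrite smith_coord_mulmx mul_diag_mx mxE dvdz_mulr.
pose t : 'cV[int]_m := \col_i (smith_coord w i ord0 %/ d ord0 i)%Z.
have coord_t : diag_mx d *m t = smith_coord w.
  by apply/matrixP => i j; rewrite ord1 mul_diag_mx mxE [t _ _]mxE mulrC divzK.
exists (F *m (V *m t)).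
rewrite (dual_gen_ext w_dual) (dual_gen_ext (dual_mulmx _)); congr (W *m _).
rewrite -mul_rowsub_mx !mulmxA -mxsub_gen_mulE G_smith -(mulmxA _ R) RV mulmx1 -mulmxA coord_t.
by rewrite /smith_coord mulmxA (mulmx1C UL) mul1mx.
Qed.

End SmithCertificate.

(* Big operators are locked, so matrix identities between explicit integer matrices are
   checked on entry functions [nat -> nat -> int], with products recomputed by [foldr]. *)
Definition mx_entries m n (A : 'M[int]_(m, n)) (f : nat -> nat -> int) : Prop :=
  forall (i : 'I_m) (j : 'I_n), A i j = f i j.

Definition all_entries (m n : nat) (P : nat -> nat -> bool) : bool :=
  all (fun i => all (P i) (iota 0 n)) (iota 0 m).

Definition mul_entries (p : nat) (f h : nat -> nat -> int) (i j : nat) : int :=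
  foldr (fun k s => f i k * h k j + s) 0 (iota 0 p).

Definition seq_entry (s : seq (seq int)) (i j : nat) : int := nth 0 (nth [::] s i) j.

Definition mx_of_seq m n (s : seq (seq int)) : 'M[int]_(m, n) :=
  \matrix_(i, j) seq_entry s i j.

Lemma all_entriesP m n P : all_entries m n P -> forall (i : 'I_m) (j : 'I_n), P i j.
Proof.
move=> /allP all_rows i j.
by apply: (allP (all_rows i _)); rewrite mem_iota add0n ltn_ord.
Qed.

Lemma mx_entries_eq m n (A B : 'M[int]_(m, n)) f h :
  mx_entries A f -> mx_entries B h -> all_entries m n (fun i j => f i j == h i j) -> A = B.
Proof. by move=> Af Bh /all_entriesP fh; apply/matrixP => i j; rewrite Af Bh; apply/eqP. Qed.

Lemma mx_entries_of_seq m n s : mx_entries (mx_of_seq m n s) (seq_entry s).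
Proof. by move=> i j; rewrite mxE. Qed.

Lemma mx_entries_mul m p n (A : 'M[int]_(m, p)) (B : 'M[int]_(p, n)) f h :
  mx_entries A f -> mx_entries B h -> mx_entries (A *m B) (mul_entries p f h).
Proof.
move=> Af Bh i j; rewrite mxE; under eq_bigr do rewrite Af Bh.
rewrite -(big_mkord xpredT (fun k => f i k * h k j)) /index_iota subn0 /mul_entries.
by elim: (iota 0 p) => [|k s IH]; rewrite ?big_nil ?big_cons ?IH.
Qed.

Lemma mx_entries_mxsub m n m' n' (f : 'I_m' -> 'I_m) (g : 'I_n' -> 'I_n) (fn gn : nat -> nat) A h :
  (forall i, val (f i) = fn i) -> (forall j, val (g j) = gn j) -> mx_entries A h ->
  mx_entries (mxsub f g A) (fun i j => h (fn i) (gn j)).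
Proof. by move=> fE gE Ah i j; rewrite mxE Ah fE gE. Qed.

Lemma mx_entries_rowsub m n m' (f : 'I_m' -> 'I_m) (fn : nat -> nat) (A : 'M[int]_(m, n)) h :
  (forall i, val (f i) = fn i) -> mx_entries A h -> mx_entries (rowsub f A) (fun i j => h (fn i) j).
Proof. by move=> fE Ah i j; rewrite mxE Ah fE. Qed.

Lemma mx_entries_scalar1 n : mx_entries (1%:M : 'M[int]_n) (fun i j => (i == j)%:R).
Proof. by move=> i j; rewrite mxE. Qed.

Lemma mx_entries_diag n (d : 'rV[int]_n) h :
  mx_entries d h -> mx_entries (diag_mx d) (fun i j => (i == j)%:R * h 0%N i).
Proof. by move=> dh i j; rewrite mxE dh mulrC mulr_natr. Qed.

(* [adj] on nat indices: [inord] does not reduce under [vm_compute]. *)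
Definition adj_nat (a b : nat) : bool :=
  [&& (a < 12)%N, (12 <= b)%N & ((b - 11)%N \in Nbr a.+1)]
  || [&& (b < 12)%N, (12 <= a)%N & ((a - 11)%N \in Nbr b.+1)].

Definition gram_entry (a b : nat) : int := (adj_nat a b)%:R - ((a == b)%:R *+ 2).

Lemma Gram_entries : mx_entries Gram gram_entry.
Proof. by move=> a b; rewrite mxE. Qed.

Lemma Gram_sym : Gram^T = Gram.
Proof. by apply/matrixP => a b; rewrite !mxE /adj orbC eq_sym. Qed.

Definition gen_index : seq nat := [:: 1; 2; 3; 4; 5; 6; 7; 10; 12; 13; 14; 17; 19; 20; 23]%N.

Lemma val_gen k : val (gen k) = nth 0%N gen_index k.
Proof.
rewrite /gen (_ : gens = map inord gen_index) // (nth_map 0%N) //= inordK //.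
have gen_lt : all (gtn 24) gen_index by [].
by apply: (allP gen_lt); apply: mem_nth.
Qed.

Definition gram_coeffs_seq : seq (seq int) :=
  [:: [:: (-1); 1; 1; (-1); 1; (-1); 1; 0; 0; (-2); 2; 0; 0; 0; 0];
     [:: 1; 0; 0; 0; 0; 0; 0; 0; 0; 0; 0; 0; 0; 0; 0];
     [:: 0; 1; 0; 0; 0; 0; 0; 0; 0; 0; 0; 0; 0; 0; 0];
     [:: 0; 0; 1; 0; 0; 0; 0; 0; 0; 0; 0; 0; 0; 0; 0];
     [:: 0; 0; 0; 1; 0; 0; 0; 0; 0; 0; 0; 0; 0; 0; 0];
     [:: 0; 0; 0; 0; 1; 0; 0; 0; 0; 0; 0; 0; 0; 0; 0];
     [:: 0; 0; 0; 0; 0; 1; 0; 0; 0; 0; 0; 0; 0; 0; 0];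
     [:: 0; 0; 0; 0; 0; 0; 1; 0; 0; 0; 0; 0; 0; 0; 0];
     [:: 0; 0; 0; 1; (-1); 0; 0; 1; (-1); 1; 0; 0; 0; (-1); 1];
     [:: 0; 0; 0; 1; 0; (-1); 0; 1; 0; 0; 0; 1; (-1); (-1); 1];
     [:: 0; 0; 0; 0; 0; 0; 0; 1; 0; 0; 0; 0; 0; 0; 0];
     [:: 0; 0; 0; 1; 0; 0; (-1); 1; (-1); 1; 0; 1; (-1); 0; 0];
     [:: 0; 0; 0; 0; 0; 0; 0; 0; 1; 0; 0; 0; 0; 0; 0];
     [:: 0; 0; 0; 0; 0; 0; 0; 0; 0; 1; 0; 0; 0; 0; 0];
     [:: 0; 0; 0; 0; 0; 0; 0; 0; 0; 0; 1; 0; 0; 0; 0];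
     [:: 0; 0; 0; (-1); 1; (-1); 1; 0; 1; (-1); 1; 0; 0; 0; 0];
     [:: (-1); 1; 0; (-1); 0; 0; 1; 0; 0; (-1); 1; 0; 1; 0; 0];
     [:: 0; 0; 0; 0; 0; 0; 0; 0; 0; 0; 0; 1; 0; 0; 0];
     [:: (-1); 1; 0; 0; 1; (-1); 0; 0; 0; (-1); 1; 1; 0; 0; 0];
     [:: 0; 0; 0; 0; 0; 0; 0; 0; 0; 0; 0; 0; 1; 0; 0];
     [:: 0; 0; 0; 0; 0; 0; 0; 0; 0; 0; 0; 0; 0; 1; 0];
     [:: (-1); 0; 1; (-1); 1; 0; 0; 0; 0; (-1); 1; 0; 0; 1; 0];
     [:: (-1); 0; 1; 0; 0; (-1); 1; 0; 0; (-1); 1; 0; 0; 0; 1];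
     [:: 0; 0; 0; 0; 0; 0; 0; 0; 0; 0; 0; 0; 0; 0; 1]].
Definition smithL_seq : seq (seq int) :=
  [:: [:: 1; 0; 0; 0; 0; 0; 0; 0; 0; 0; 0; 0; 0; 0; 0];
     [:: 0; 1; 0; 0; 0; 0; 0; 0; 0; 0; 0; 0; 0; 0; 0];
     [:: 0; 1; (-1); 0; 0; 0; 0; 0; 0; 0; 0; 0; 0; 0; 0];
     [:: 0; 0; 1; 1; 0; 0; 0; 0; 0; 0; 0; 0; 0; 0; 0];
     [:: 1; 1; 0; (-1); 2; 0; 0; 2; (-2); 20; (-57); 20; (-87); 69; 10];
     [:: 0; 0; 0; 1; 0; 0; (-2); 2; 0; 8; (-23); 8; (-36); 28; 4];
     [:: 1; 1; (-1); (-1); 0; (-2); 0; 0; 2; (-2); 6; (-2); 9; (-7); (-1)];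
     [:: 0; 1; 0; 1; (-1); 0; 0; 0; 0; 0; 0; 0; 0; 0; 0];
     [:: (-2); 0; 0; 2; (-2); 1; 0; 0; 0; 0; 0; 0; 0; 0; 0];
     [:: 0; 0; 0; (-2); 2; 0; 1; 0; 0; 0; 0; 0; 0; 0; 0];
     [:: 0; (-2); 2; 0; 2; 1; 0; 1; 0; 0; 0; 0; 0; 0; 0];
     [:: 0; 0; (-2); 0; (-2); 0; 0; 0; 1; 0; 0; 0; 0; 0; 0];
     [:: 0; 0; 0; 0; 0; 1; 1; 0; (-1); 4; (-12); 3; (-18); 14; 2];
     [:: 0; 0; 0; 0; (-2); 0; 1; (-3); 1; (-19); 54; (-18); 81; (-63); (-9)];
     [:: 0; 0; 0; 0; 0; 1; 0; 1; (-1); 9; (-26); 9; (-41); 34; 5]].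
Definition smithLinv_seq : seq (seq int) :=
  [:: [:: 1; 0; 0; 0; 0; 0; 0; 0; 0; 0; 0; 0; 0; 0; 0];
     [:: 0; 1; 0; 0; 0; 0; 0; 0; 0; 0; 0; 0; 0; 0; 0];
     [:: 0; 1; (-1); 0; 0; 0; 0; 0; 0; 0; 0; 0; 0; 0; 0];
     [:: 0; (-1); 1; 1; 0; 0; 0; 0; 0; 0; 0; 0; 0; 0; 0];
     [:: 0; 0; 1; 1; 0; 0; 0; (-1); 0; 0; 0; 0; 0; 0; 0];
     [:: 2; 2; 0; 0; 0; 0; 0; (-2); 1; 0; 0; 0; 0; 0; 0];
     [:: 0; (-2); 0; 0; 0; 0; 0; 2; 0; 1; 0; 0; 0; 0; 0];
     [:: (-2); (-2); 0; (-2); 0; 0; 0; 4; (-1); 0; 1; 0; 0; 0; 0];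
     [:: 0; 2; 0; 2; 0; 0; 0; (-2); 0; 0; 0; 1; 0; 0; 0];
     [:: 33; (-3); (-2); (-21); 0; 0; 9; (-10); 21; 1; (-3); (-17); 0; (-1); 0];
     [:: 16; (-3); (-1); (-9); 0; 1; 4; (-4); 10; 2; (-2); (-8); 0; 0; 0];
     [:: (-4); 0; 0; 4; 0; 0; (-2); 2; (-3); 1; 0; 3; (-1); 0; 0];
     [:: (-5); 1; 0; 4; (-1); (-1); (-2); 2; (-4); 0; 0; 3; (-1); (-1); 1];
     [:: 0; (-2); (-2); 8; (-4); 0; (-4); 4; (-4); 6; (-4); 3; (-3); (-3); 3];
     [:: (-10); 12; 12; (-37); 19; (-3); 19; (-18); 14; (-34); 22; (-12); 14; 14; (-12)]].
Definition smithR_seq : seq (seq int) :=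
  [:: [:: (-2); 0; 0; 0; 0; 0; 0; 0; 1; 1; 0; 0; 0; 0; 0];
     [:: 0; (-2); 0; 0; 0; 0; 0; 0; 0; 0; 1; 1; 1; 0; 0];
     [:: 0; (-2); 2; 0; 0; 0; 0; 0; 0; 0; 0; 1; 1; (-1); (-1)];
     [:: 0; 2; (-2); (-2); 0; 0; 0; 0; 0; 1; 0; 0; (-1); 1; 2];
     [:: 0; 0; (-2); (-2); 0; 0; 0; 2; 0; 0; 0; 0; 0; 1; 1];
     [:: (-3); (-4); 0; 0; 1; 0; 1; 4; 0; 0; 0; 0; 2; 0; (-2)];
     [:: 1; 4; 0; 1; 0; 1; 0; (-3); 0; 0; 0; 0; (-2); 0; 2];
     [:: 3; 5; 1; 4; 0; 0; 0; (-7); 0; 0; 0; 0; (-2); 0; 2];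
     [:: 0; (-3); 0; (-3); 1; 0; 0; 5; 0; 0; 0; 0; 2; 0; 0];
     [:: (-44); (-14); 0; 26; 0; 0; 0; 1; 0; 0; 0; 0; 6; 0; (-24)];
     [:: (-10); (-2); 0; 6; 0; 0; 0; 0; 0; 0; 0; 0; 1; 0; (-5)];
     [:: 3; 1; 0; (-2); 0; 0; 0; 0; 0; 0; 0; 0; 0; 0; 2];
     [:: 3; 0; 0; (-2); 0; 0; 0; 0; 0; 0; 0; 0; 0; 0; 1];
     [:: 1; 0; 0; (-2); 0; 0; 0; 0; 0; 0; 0; 0; 0; 0; 0];
     [:: 0; 0; 0; 1; 0; 0; 0; 0; 0; 0; 0; 0; 0; 0; 0]].
Definition smithRinv_seq : seq (seq int) :=
  [:: [:: 0; 0; 0; 0; 0; 0; 0; 0; 0; 0; 0; 0; 0; 1; 2];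
     [:: 0; 0; 0; 0; 0; 0; 0; 0; 0; 0; 0; 1; (-2); 3; 4];
     [:: 0; 0; 0; 0; 0; 0; 0; 1; 0; 7; (-40); 13; (-60); 46; 52];
     [:: 0; 0; 0; 0; 0; 0; 0; 0; 0; 0; 0; 0; 0; 0; 1];
     [:: 0; 0; 0; 0; 0; 0; 0; 0; 1; (-5); 28; (-11); 42; (-33); (-39)];
     [:: 0; 0; 0; 0; 0; 0; 1; 0; 0; 3; (-16); 6; (-22); 19; 23];
     [:: 0; 0; 0; 0; 0; 1; 0; 0; (-1); 1; (-6); 3; (-10); 8; 9];
     [:: 0; 0; 0; 0; 0; 0; 0; 0; 0; 1; (-6); 2; (-10); 8; 10];
     [:: 1; 0; 0; (-1); 1; 0; 0; 0; 0; (-2); 11; (-4); 16; (-12); (-14)];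
     [:: 0; 0; 0; 1; (-1); 0; 0; 0; 0; 2; (-11); 4; (-16); 14; 18];
     [:: 0; 1; (-1); 0; (-1); 0; 0; 0; 0; 2; (-12); 4; (-20); 16; 18];
     [:: 0; 0; 1; 0; 1; 0; 0; 0; 0; (-2); 11; (-4); 15; (-11); (-12)];
     [:: 0; 0; 0; 0; 0; 0; 0; 0; 0; 0; 1; 2; 1; 1; 2];
     [:: 0; 0; 0; 0; 1; 0; 0; 2; 0; 12; (-68); 22; (-101); 79; 90];
     [:: 0; 0; 0; 0; 0; 0; 0; 0; 0; 0; 0; 0; 1; (-3); (-4)]].

Definition gram_coeffs : 'M[int]_(24, 15) := mx_of_seq 24 15 gram_coeffs_seq.
Definition smithL : 'M[int]_15 := mx_of_seq 15 15 smithL_seq.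
Definition smithLinv : 'M[int]_15 := mx_of_seq 15 15 smithLinv_seq.
Definition smithR : 'M[int]_15 := mx_of_seq 15 15 smithR_seq.
Definition smithRinv : 'M[int]_15 := mx_of_seq 15 15 smithRinv_seq.
Definition smithD_seq : seq (seq int) := [:: [:: 1; 1; 1; 1; 1; 1; 1; 1; 1; 1; 2; 2; 2; 2; 16]].
Definition smithD : 'rV[int]_15 := mx_of_seq 1 15 smithD_seq.

Lemma Gram_factor : Gram = gram_coeffs *m rowsub gen Gram.
Proof.
apply: mx_entries_eq Gram_entries
  (mx_entries_mul (mx_entries_of_seq _) (mx_entries_rowsub val_gen Gram_entries)) _.
by vm_compute.
Qed.

Lemma smithLinvK : smithLinv *m smithL = 1%:M.
Proof.
apply: mx_entries_eq (mx_entries_mul (mx_entries_of_seq _) (mx_entries_of_seq _))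
  (@mx_entries_scalar1 _) _.
by vm_compute.
Qed.

Lemma smithRK : smithR *m smithRinv = 1%:M.
Proof.
apply: mx_entries_eq (mx_entries_mul (mx_entries_of_seq _) (mx_entries_of_seq _))
  (@mx_entries_scalar1 _) _.
by vm_compute.
Qed.

Lemma Gram_smith : mxsub gen gen Gram = smithL *m diag_mx smithD *m smithR.
Proof.
apply: mx_entries_eq (mx_entries_mxsub val_gen val_gen Gram_entries)
  (mx_entries_mul (mx_entries_mul (mx_entries_of_seq _) (mx_entries_diag (mx_entries_of_seq _)))
    (mx_entries_of_seq _)) _.
by vm_compute.
Qed.

Lemma smithD_neq0 i : smithD 0 i != 0.
Proof.
rewrite mx_entries_of_seq.
exact: (@all_entriesP 1 15 (fun i j => seq_entry smithD_seq i j != 0) isT 0 i).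
Qed.

Lemma intr_Zp_eq0 p (z : int) : ((z%:~R : 'Z_p.+2) == 0) = (p.+2 %| z)%Z.
Proof.
by case: z => k; rewrite ?NegzE ?rmorphN ?oppr_eq0 dvdzE /= -pmulrn -val_eqE /= val_Zp_nat.
Qed.

Definition to_Dtarget (t : 'cV[int]_15) : Dtarget :=
  ((t (inord 10) 0)%:~R, (t (inord 11) 0)%:~R, (t (inord 12) 0)%:~R,
   (t (inord 13) 0)%:~R, (t (inord 14) 0)%:~R).

Lemma to_DtargetD t1 t2 : to_Dtarget (t1 + t2) = to_Dtarget t1 + to_Dtarget t2.
Proof. by rewrite /to_Dtarget !mxE !intrD. Qed.

Lemma to_Dtarget_surj x : exists t, to_Dtarget t = x.
Proof.
case: x => [[[[x10 x11] x12] x13] x14].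
pose xs := [:: 0; 0; 0; 0; 0; 0; 0; 0; 0; 0; val x10; val x11; val x12; val x13; val x14]%N.
exists (\col_i (nth 0%N xs i)%:Z).
by rewrite /to_Dtarget !mxE !inordK //= -!pmulrn !natr_Zp.
Qed.

Lemma to_Dtarget_eq0 t : to_Dtarget t = 0 <-> forall i, (smithD ord0 i %| t i ord0)%Z.
Proof.
split=> [|dvd_t].
  case=> /eqP h10 /eqP h11 /eqP h12 /eqP h13 /eqP h14 i.
  move: h10 h11 h12 h13 h14; rewrite !intr_Zp_eq0 => h10 h11 h12 h13 h14.
  rewrite -[i]inord_val mxE inordK //; case: i => /= k lt_k.
  do 10 (case: k lt_k => [|k] lt_k; first exact: dvd1z).
  case: k lt_k => [|k] lt_k; first exact: h10.
  case: k lt_k => [|k] lt_k; first exact: h11.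
  case: k lt_k => [|k] lt_k; first exact: h12.
  case: k lt_k => [|k] lt_k; first exact: h13.
  by case: k lt_k => [|k] lt_k; first exact: h14.
have dvd_at k : (k < 15)%N -> (seq_entry smithD_seq 0 k %| t (inord k) ord0)%Z.
  by move=> lt_k; have := dvd_t (inord k); rewrite mxE inordK.
move: (dvd_at 10%N isT) (dvd_at 11%N isT) (dvd_at 12%N isT) (dvd_at 13%N isT) (dvd_at 14%N isT).
by rewrite /to_Dtarget -!intr_Zp_eq0 => /eqP-> /eqP-> /eqP-> /eqP-> /eqP->.
Qed.

Theorem proposition4p1 :
  (* S = Z Gamma / radZG is freely generated by the images of the 15 vertices
     (hence has rank 15): spanning ... *)
  ((forall v : 'rV[int]_24, exists c : 'rV[int]_15,
      v - \sum_(k < 15) c 0 k *: evec (gen k) \in radZG)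
   (* ... and linear independence modulo the radical *)
   /\ (forall c : 'rV[int]_15,
      \sum_(k < 15) c 0 k *: evec (gen k) \in radZG -> c = 0))
  (* S^vee / S is isomorphic to (Z/2)^4 + Z/16: a homomorphism from S^vee onto
     the target whose kernel is exactly the image of S. *)
  /\ (exists phi : 'cV[int]_24 -> Dtarget,
      [/\ (forall w1 w2, dualS w1 -> dualS w2 -> phi (w1 + w2) = phi w1 + phi w2),
          (forall d : Dtarget, exists2 w, dualS w & phi w = d)
        & (forall w, dualS w -> (phi w = 0 <-> inS w))]).
Proof.
have coord_surj := smith_coord_surj Gram_factor smithLinvK smithRK Gram_smith smithD_neq0.
have image_dvd := dual_image_smith_dvd Gram_sym Gram_factor smithLinvK smithRK Gram_smith.
split; [split|].
- move=> v; exists (v *m gram_coeffs).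
  by rewrite /evec sum_delta_gen unfold_in /radZG (gen_span Gram_factor).
- move=> c; rewrite /evec sum_delta_gen unfold_in => /eqP.
  exact: (gen_free smithLinvK smithRK Gram_smith smithD_neq0).
exists (fun w => to_Dtarget (smith_coord gen smithLinv w)); split.
- by move=> w1 w2 _ _; rewrite smith_coordD to_DtargetD.
- move=> x; have [t <-] := to_Dtarget_surj x.
  by have [w w_dual <-] := coord_surj t; exists w.
- move=> w w_dual.
  apply: iff_trans (to_Dtarget_eq0 _) (iff_trans (iff_sym (image_dvd w w_dual)) _).
  by split=> [[x ->]|[x ->]]; [exists x^T; rewrite trmxK | exists x^T].
Qed.
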